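(* Let $\alpha=\{a_k\}_{k\ge1}$ be a sequence of positive numbers with $a_k\to\infty$ and $0<x_\alpha\le1$, and let $j\ge2$. If $I(\alpha;j)=\infty$, then $\lim_{N\to\infty}E[U_j^N]=\infty$.
   Context: For $N\ge2$, coupon type $k\in\{1,\dots,N\}$ has probability $a_k/\sum_{i=1}^Na_i$; $U_j^N$ is the number of empty album places of the $j$-th collector when the first collector completes her set (each collector passes duplicates to the next one), with $$E[U_j^N]=\sum_{k=1}^N\int_0^\infty a_k e^{-a_k t}\frac{(a_kt)^{j-1}}{(j-1)!}\prod_{i\ne k,\,1\le i\le N}\big(1-e^{-a_i t}\big)\,dt.$$ Define $x_\alpha:=\inf\{x\in[0,1]:\sum_{k=1}^\infty x^{a_k}=\infty\}$; for $x\in(0,x_\alpha)$ let $L(x;\alpha;j):=\sum_{k=1}^\infty a_k^j\frac{x^{a_k}}{1-x^{a_k}}$ and $F(x;\alpha):=\prod_{k=1}^\infty(1-x^{a_k})$, and $$I(\alpha;j):=\frac{1}{(j-1)!}\int_0^{x_\alpha}L(x;\alpha;j)F(x;\alpha)|\ln x|^{j-1}\frac{dx}{x}.$$ *)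

From Stdlib Require Import Reals Lra Lia Classical ClassicalEpsilon Factorial.
Open Scope R_scope.

(* Indexing convention: the paper's a_1, a_2, ... is represented by
   a 0, a 1, ... ; the paper's index k in {1..N} is k+1 for k in {0..N-1}. *)

Fixpoint sumR (n : nat) (f : nat -> R) : R :=
  match n with O => 0 | S m => sumR m f + f m end.
Fixpoint prodR (n : nat) (f : nat -> R) : R :=
  match n with O => 1 | S m => prodR m f * f m end.

(* real power x^a for x >= 0 (with 0^a = 0 for a > 0) *)
Definition pw (x a : R) : R := if Rle_dec x 0 then 0 else Rpower x a.

(* limit of a sequence (meaningful when it converges) *)
Definition lim (u : nat -> R) : R := epsilon (inhabits 0) (fun l => Un_cv u l).

Definition is_glb (S : R -> Prop) (m : R) : Prop :=
  (forall x, S x -> m <= x) /\ (forall m', (forall x, S x -> m' <= x) -> m' <= m).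

Definition div_set (a : nat -> R) (x : R) : Prop :=
  0 <= x <= 1 /\ ~ (exists l, Un_cv (fun n => sumR n (fun k => pw x (a k))) l).

Definition x_alpha (a : nat -> R) : R := epsilon (inhabits 0) (is_glb (div_set a)).

Definition Lfun (a : nat -> R) (j : nat) (x : R) : R :=
  lim (fun n => sumR n (fun k => a k ^ j * pw x (a k) / (1 - pw x (a k)))).

Definition Ffun (a : nat -> R) (x : R) : R :=
  lim (fun n => prodR n (fun k => 1 - pw x (a k))).

Definition I_integrand (a : nat -> R) (j : nat) (x : R) : R :=
  / INR (fact (j - 1)) * (Lfun a j x * Ffun a x * Rabs (ln x) ^ (j - 1) / x).

(* I(alpha; j) = infinity : the (improper, nonnegative) integral over
   (0, x_alpha) is unbounded, i.e. Riemann integrals over compact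
   subintervals [c,d] of (0, x_alpha) are unbounded. *)
Definition I_infinite (a : nat -> R) (j : nat) : Prop :=
  forall M : R, exists c d, 0 < c <= d /\ d < x_alpha a /\
    exists pr : Riemann_integrable (I_integrand a j) c d, M <= RiemannInt pr.

Definition int_0_inf (f : R -> R) : R :=
  epsilon (inhabits 0) (fun l => forall eps, eps > 0 -> exists T0, forall T
    (pr : Riemann_integrable f 0 T), T0 <= T -> Rabs (RiemannInt pr - l) < eps).

Definition EU_integrand (a : nat -> R) (j N : nat) (t : R) : R :=
  sumR N (fun k => a k * exp (- (a k * t)) * ((a k * t) ^ (j - 1) / INR (fact (j - 1)))
    * prodR N (fun i => if Nat.eq_dec i k then 1 else 1 - exp (- (a i * t)))).

Definition EU (a : nat -> R) (j N : nat) : R := int_0_inf (EU_integrand a j N).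

From Pilot Require Import Defs.
From Stdlib Require Import Reals Lra Lia Classical ClassicalEpsilon Factorial.
From Coquelicot Require ElemFct.
From Coquelicot Require Import Coquelicot.
Open Scope R_scope.

(* Substituting [x = e^{-t}], the integrand of [E[U_j^N]] at [t = - ln x] dominates
   [t^{j-1}/(j-1)! F(x)] times the [N]-th partial sum of [L(x)], because the product over the
   coupon types [i <> k] is at least [F(x) / (1 - x^{a_k})].  On a compact [[c, d]] inside
   [(0, x_alpha)] the remaining tails of [L] are uniformly controlled by the tail of [L(d)], which
   tends to [0] since the terms of [L(d)] are dominated by a multiple of [y^{a_k}] for any
   [d < y < x_alpha].  Hence [E[U_j^N]] eventually exceeds the integral of [I(alpha; j)] over
   [[c, d]] minus [1], and these integrals are unbounded. *)

Lemma sumR_le n f g : (forall k, (k < n)%nat -> f k <= g k) -> sumR n f <= sumR n g.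
Proof.
  induction n as [|n IH]; simpl; intros H; [lra|].
  assert (sumR n f <= sumR n g) by (apply IH; intros; apply H; lia).
  specialize (H n ltac:(lia)). lra.
Qed.

Lemma sumR_const n c : sumR n (fun _ => c) = INR n * c.
Proof. induction n as [|n IH]; simpl sumR; [simpl; ring|]. rewrite IH, S_INR. ring. Qed.

Lemma sumR_nonneg n f : (forall k, (k < n)%nat -> 0 <= f k) -> 0 <= sumR n f.
Proof.
  intros H. rewrite <- (Rmult_0_r (INR n)), <- sumR_const. now apply sumR_le.
Qed.

Lemma sumR_scal n c f : sumR n (fun k => c * f k) = c * sumR n f.
Proof. induction n as [|n IH]; simpl; [ring|]. rewrite IH. ring. Qed.

Lemma sumR_minus n f g : sumR n (fun k => f k - g k) = sumR n f - sumR n g.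
Proof. induction n as [|n IH]; simpl; [ring|]. rewrite IH. ring. Qed.

Lemma sumR_growing f : (forall k, 0 <= f k) -> Un_growing (fun n => sumR n f).
Proof. intros H n. simpl. specialize (H n). lra. Qed.

Lemma prodR_ext n f g : (forall k, (k < n)%nat -> f k = g k) -> prodR n f = prodR n g.
Proof.
  induction n as [|n IH]; simpl; intros H; [reflexivity|].
  rewrite IH by (intros; apply H; lia). now rewrite H by lia.
Qed.

Lemma prodR_bounds n f : (forall k, 0 <= f k <= 1) -> 0 <= prodR n f <= 1.
Proof.
  induction n as [|n IH]; simpl; intros H; [lra|].
  destruct (IH H), (H n). split; [now apply Rmult_le_pos|].
  rewrite <- (Rmult_1_r 1). now apply Rmult_le_compat.
Qed.

Lemma prodR_except n k f : (k < n)%nat ->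
  prodR n (fun i => if Nat.eq_dec i k then 1 else f i) * f k = prodR n f.
Proof.
  induction n as [|n IH]; intros Hk; [lia|]. simpl.
  destruct (Nat.eq_dec n k) as [->|Hnk].
  - rewrite (prodR_ext k _ f); [ring|].
    intros i Hi. destruct (Nat.eq_dec i k); [lia|reflexivity].
  - rewrite <- IH by lia. ring.
Qed.

Lemma continuous_sumR N (fs : nat -> R -> R) t : (forall k, continuous (fs k) t) ->
  continuous (fun t => sumR N (fun k => fs k t)) t.
Proof.
  intros H. induction N as [|N IH]; simpl.
  - apply continuous_const.
  - now apply (continuous_plus (fun t => sumR N (fun k => fs k t)) (fs N)).
Qed.

Lemma continuous_prodR N (fs : nat -> R -> R) t : (forall k, continuous (fs k) t) ->
  continuous (fun t => prodR N (fun k => fs k t)) t.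
Proof.
  intros H. induction N as [|N IH]; simpl.
  - apply continuous_const.
  - now apply (continuous_mult (fun t => prodR N (fun k => fs k t)) (fs N)).
Qed.

Lemma is_RInt_sumR N (fs : nat -> R -> R) (I : nat -> R) u v :
  (forall k, is_RInt (fs k) u v (I k)) ->
  is_RInt (fun t => sumR N (fun k => fs k t)) u v (sumR N I).
Proof.
  intros H. induction N as [|N IH]; simpl.
  - generalize (is_RInt_const (V:=R_NormedModule) u v 0).
    unfold scal; simpl; unfold mult; simpl. now rewrite Rmult_0_r.
  - now apply (is_RInt_plus (V:=R_NormedModule)).
Qed.

Lemma lim_eq u l : Un_cv u l -> Defs.lim u = l.
Proof.
  intros H. apply (UL_sequence u); [|exact H].
  apply (epsilon_spec (inhabits 0) (fun l => Un_cv u l)). now exists l.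
Qed.

Lemma sumR_cv_dominated f g C lg :
  (forall k, 0 <= f k) -> (forall k, 0 <= g k) -> 0 <= C -> (forall k, f k <= C * g k) ->
  Un_cv (fun n => sumR n g) lg -> exists l, Un_cv (fun n => sumR n f) l.
Proof.
  intros Hf Hg HC Hfg Hlg.
  destruct (growing_cv _ (sumR_growing f Hf)) as [l Hl]; [|now exists l].
  exists (C * lg). intros s [n ->].
  apply Rle_trans with (sumR n (fun k => C * g k)); [now apply sumR_le|].
  rewrite sumR_scal. apply Rmult_le_compat_l; [exact HC|].
  exact (growing_ineq _ _ (sumR_growing g Hg) Hlg n).
Qed.

Lemma exp_le_compat x y : x <= y -> exp x <= exp y.
Proof. intros [H|H]; [left; now apply exp_increasing|now subst]. Qed.

Lemma exp_lt_one z : z < 0 -> exp z < 1.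
Proof. intros H. rewrite <- exp_0. now apply exp_increasing. Qed.

Lemma ln_neg x : 0 < x < 1 -> ln x < 0.
Proof. intros Hx. rewrite <- ln_1. apply ln_increasing; lra. Qed.

Lemma pow_div_fact_le_exp y n : 0 <= y -> y ^ n / INR (fact n) <= exp y.
Proof.
  intros Hy. eapply Rle_trans; [|apply (ElemFct.exp_ge_taylor y n Hy)].
  assert (Hnn : forall k, 0 <= y ^ k / INR (fact k)).
  { intros k. apply Rmult_le_pos; [now apply pow_le|].
    left; apply Rinv_0_lt_compat, INR_fact_lt_0. }
  destruct n; simpl; [lra|].
  pose proof (cond_pos_sum _ n Hnn). simpl in *. lra.
Qed.

Lemma pow_mul_exp_neg_le s u j : 0 <= s -> 0 < u ->
  s ^ j * exp (- (s * u)) <= INR (fact j) / u ^ j.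
Proof.
  intros Hs Hu.
  assert (Hf : 0 < INR (fact j)) by apply INR_fact_lt_0.
  assert (Huj : 0 < u ^ j) by (apply pow_lt; lra).
  assert (Hexp : exp (- (s * u)) * exp (s * u) = 1).
  { rewrite <- exp_plus, <- exp_0. f_equal. ring. }
  pose proof (pow_div_fact_le_exp (s * u) j ltac:(nra)) as Htaylor.
  pose proof (exp_pos (- (s * u))) as He.
  apply (Rmult_le_reg_r (u ^ j)); [exact Huj|].
  replace (INR (fact j) / u ^ j * u ^ j) with (INR (fact j) * (exp (- (s * u)) * exp (s * u)))
    by (rewrite Hexp; field; lra).
  replace (s ^ j * exp (- (s * u)) * u ^ j)
    with (INR (fact j) * (exp (- (s * u)) * ((s * u) ^ j / INR (fact j))))
    by (rewrite Rpow_mult_distr; field; lra).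
  apply Rmult_le_compat_l; [lra|]. apply Rmult_le_compat_l; lra.
Qed.

Lemma pw_exp x c : 0 < x -> pw x c = exp (c * ln x).
Proof. intros H. unfold pw. destruct (Rle_dec x 0); [lra|reflexivity]. Qed.

Lemma pw_in01 x c : 0 < c -> 0 < x < 1 -> 0 < pw x c < 1.
Proof.
  intros Hc Hx. rewrite pw_exp by lra. pose proof (ln_neg x Hx).
  split; [apply exp_pos|apply exp_lt_one; nra].
Qed.

Lemma pw_le_compat_l x y c : 0 < c -> 0 < x <= y -> pw x c <= pw y c.
Proof.
  intros Hc Hxy. rewrite !pw_exp by lra. apply exp_le_compat.
  apply Rmult_le_compat_l; [lra|]. apply ln_le; lra.
Qed.

Lemma pw_le_compat_r x b c : 0 < x < 1 -> b <= c -> pw x c <= pw x b.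
Proof.
  intros Hx Hbc. rewrite !pw_exp by lra. apply exp_le_compat.
  pose proof (ln_neg x Hx). nra.
Qed.

Lemma pw_1 c : pw 1 c = 1.
Proof. rewrite pw_exp, ln_1, Rmult_0_r by lra. apply exp_0. Qed.

Lemma cv_infty_lower_bound a : (forall k, 0 < a k) -> cv_infty a ->
  exists b, 0 < b /\ forall k, b <= a k.
Proof.
  intros Hpos Hinf. destruct (Hinf 1) as [N HN].
  assert (Hfirst : forall n, exists b, 0 < b /\ forall k, (k < n)%nat -> b <= a k).
  { induction n as [|n [b [Hb Hk]]]; [exists 1; split; [lra|lia]|].
    exists (Rmin b (a n)). split; [now apply Rmin_glb_lt|].
    intros k Hkn. destruct (Nat.eq_dec k n) as [->|Hkn']; [apply Rmin_r|].
    eapply Rle_trans; [apply Rmin_l|apply Hk; lia]. }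
  destruct (Hfirst N) as [b [Hb Hk]]. exists (Rmin b 1). split; [apply Rmin_glb_lt; lra|].
  intros k. destruct (Compare_dec.le_lt_dec N k) as [HNk|HkN].
  - specialize (HN k HNk). eapply Rle_trans; [apply Rmin_r|lra].
  - eapply Rle_trans; [apply Rmin_l|now apply Hk].
Qed.

Lemma div_set_1 a : div_set a 1.
Proof.
  split; [lra|]. intros [l Hl].
  assert (Hn : forall n, sumR n (fun k => pw 1 (a k)) = INR n).
  { intros n. rewrite <- (Rmult_1_r (INR n)), <- sumR_const.
    induction n as [|n IH]; simpl; [reflexivity|]. now rewrite IH, pw_1. }
  destruct (Hl 1 ltac:(lra)) as [N HN].
  pose proof (HN N ltac:(lia)) as H1. pose proof (HN (N + 2)%nat ltac:(lia)) as H2.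
  unfold Rdist in *. rewrite Hn in H1, H2. rewrite plus_INR in H2. simpl in H2.
  apply Rabs_def2 in H1. apply Rabs_def2 in H2. lra.
Qed.

Lemma x_alpha_glb a : is_glb (div_set a) (x_alpha a).
Proof.
  unfold x_alpha. apply epsilon_spec.
  set (E := fun y => div_set a (- y)).
  assert (Hb : bound E) by (exists 0; intros y [[H1 H2] _]; lra).
  assert (Hne : exists y, E y) by (exists (-1); unfold E; replace (- -1) with 1 by ring; apply div_set_1).
  destruct (completeness E Hb Hne) as [m [Hub Hlub]].
  exists (- m). split.
  - intros x Hx. assert (E (- x)) as HE by (unfold E; now rewrite Ropp_involutive).
    specialize (Hub _ HE). lra.
  - intros m' Hm'. assert (is_upper_bound E (- m')) as HE.
    { intros y Hy. specialize (Hm' _ Hy). lra. }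
    specialize (Hlub _ HE). lra.
Qed.

Lemma x_alpha_le_1 a : x_alpha a <= 1.
Proof. apply (proj1 (x_alpha_glb a)), div_set_1. Qed.

Lemma pw_series_cv a y : 0 <= y < x_alpha a ->
  exists l, Un_cv (fun n => sumR n (fun k => pw y (a k))) l.
Proof.
  intros Hy. apply NNPP. intros Hdiv.
  assert (div_set a y) as Hyd by (pose proof (x_alpha_le_1 a); split; [lra|exact Hdiv]).
  pose proof (proj1 (x_alpha_glb a) _ Hyd). lra.
Qed.

Definition L_term (j : nat) (x c : R) : R := c ^ j * pw x c / (1 - pw x c).

Definition L_partial (a : nat -> R) (j : nat) (x : R) (n : nat) : R :=
  sumR n (fun k => L_term j x (a k)).

Definition L_tail (a : nat -> R) (j : nat) (x : R) (n : nat) : R :=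
  Lfun a j x - L_partial a j x n.

Lemma L_term_nonneg j x c : 0 < c -> 0 < x < 1 -> 0 <= L_term j x c.
Proof.
  intros Hc Hx. pose proof (pw_in01 x c Hc Hx). unfold L_term, Rdiv.
  apply Rmult_le_pos; [apply Rmult_le_pos; [apply pow_le|]|left; apply Rinv_0_lt_compat]; lra.
Qed.

Lemma L_term_le_compat j x y c : 0 < c -> 0 < x <= y -> y < 1 -> L_term j x c <= L_term j y c.
Proof.
  intros Hc Hxy Hy. unfold L_term, Rdiv.
  pose proof (pw_le_compat_l x y c Hc Hxy).
  pose proof (pw_in01 x c Hc ltac:(lra)). pose proof (pw_in01 y c Hc ltac:(lra)).
  rewrite !Rmult_assoc. apply Rmult_le_compat_l; [apply pow_le; lra|].
  apply Rmult_le_compat; try lra.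
  - left; apply Rinv_0_lt_compat; lra.
  - apply Rinv_le_contravar; lra.
Qed.

(* Writing [x^c = e^{-c u} y^c] with [u = ln y - ln x > 0] trades the polynomial factor [c^j]
   for the gap between [x] and [y], uniformly in [c >= b]. *)
Lemma L_term_le_pw j b x y c : 0 < b <= c -> 0 < x < y -> y < 1 ->
  L_term j x c <= INR (fact j) / (ln y - ln x) ^ j / (1 - pw x b) * pw y c.
Proof.
  intros Hbc Hxy Hy. set (u := ln y - ln x).
  assert (Hu : 0 < u) by (unfold u; pose proof (ln_increasing x y ltac:(lra) ltac:(lra)); lra).
  assert (Hsplit : pw x c = exp (- (c * u)) * pw y c).
  { rewrite !pw_exp, <- exp_plus by lra. f_equal. unfold u. ring. }
  pose proof (pow_mul_exp_neg_le c u j ltac:(lra) Hu) as Hpoly.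
  pose proof (pw_le_compat_r x b c ltac:(lra) ltac:(lra)) as Hbc'.
  pose proof (pw_in01 x b ltac:(lra) ltac:(lra)). pose proof (pw_in01 x c ltac:(lra) ltac:(lra)).
  pose proof (pw_in01 y c ltac:(lra) ltac:(lra)).
  pose proof (exp_pos (- (c * u))). pose proof (pow_le c j ltac:(lra)).
  unfold L_term. rewrite Hsplit at 1.
  replace (c ^ j * (exp (- (c * u)) * pw y c) / (1 - pw x c))
    with (c ^ j * exp (- (c * u)) * pw y c * / (1 - pw x c)) by (unfold Rdiv; ring).
  replace (INR (fact j) / u ^ j / (1 - pw x b) * pw y c)
    with (INR (fact j) / u ^ j * pw y c * / (1 - pw x b)) by (unfold Rdiv; ring).
  apply Rmult_le_compat.
  - apply Rmult_le_pos; [apply Rmult_le_pos|]; lra.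
  - left; apply Rinv_0_lt_compat; lra.
  - apply Rmult_le_compat_r; lra.
  - apply Rinv_le_contravar; lra.
Qed.

Lemma L_partial_cv a j x : (forall k, 0 < a k) -> cv_infty a -> 0 < x < x_alpha a ->
  Un_cv (L_partial a j x) (Lfun a j x).
Proof.
  intros Hpos Hinf Hx. pose proof (x_alpha_le_1 a).
  destruct (cv_infty_lower_bound a Hpos Hinf) as [b [Hb Hba]].
  set (y := (x + x_alpha a) / 2).
  destruct (pw_series_cv a y ltac:(unfold y; lra)) as [ly Hly].
  assert (Hxb : 0 < 1 - pw x b) by (pose proof (pw_in01 x b Hb ltac:(lra)); lra).
  assert (Hu : 0 < ln y - ln x) by (pose proof (ln_increasing x y ltac:(lra) ltac:(unfold y; lra)); lra).
  destruct (sumR_cv_dominated (fun k => L_term j x (a k)) (fun k => pw y (a k))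
              (INR (fact j) / (ln y - ln x) ^ j / (1 - pw x b)) ly) as [l Hl].
  - intros k. apply L_term_nonneg; [apply Hpos|lra].
  - intros k. left. apply pw_in01; [apply Hpos|unfold y; lra].
  - unfold Rdiv. pose proof (INR_fact_lt_0 j). pose proof (pow_lt _ j Hu).
    apply Rmult_le_pos; [apply Rmult_le_pos|]; left; try apply Rinv_0_lt_compat; lra.
  - intros k. apply L_term_le_pw; [split; [lra|apply Hba]|unfold y; lra..].
  - exact Hly.
  - unfold L_partial, L_term in Hl |- *. unfold Lfun. now rewrite (lim_eq _ l Hl).
Qed.

Lemma L_partial_le a j x n : (forall k, 0 < a k) -> cv_infty a -> 0 < x < x_alpha a ->
  L_partial a j x n <= Lfun a j x.
Proof.
  intros Hpos Hinf Hx. pose proof (x_alpha_le_1 a).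
  apply (growing_ineq _ _ (sumR_growing _ (fun k => L_term_nonneg j x (a k) (Hpos k) ltac:(lra)))).
  now apply L_partial_cv.
Qed.

Lemma L_tail_le_compat a j x d n : (forall k, 0 < a k) -> cv_infty a ->
  0 < x <= d -> d < x_alpha a -> L_tail a j x n <= L_tail a j d n.
Proof.
  intros Hpos Hinf Hxd Hd. pose proof (x_alpha_le_1 a).
  set (diff := fun k => L_term j d (a k) - L_term j x (a k)).
  assert (Hcv : Un_cv (fun n => sumR n diff) (Lfun a j d - Lfun a j x)).
  { eapply Un_cv_ext; [|apply CV_minus; apply L_partial_cv; auto; lra].
    intros m. unfold diff, L_partial. now rewrite sumR_minus. }
  assert (Hgrow : Un_growing (fun n => sumR n diff)).
  { apply sumR_growing. intros k. unfold diff.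
    pose proof (L_term_le_compat j x d (a k) (Hpos k) Hxd ltac:(lra)). lra. }
  pose proof (growing_ineq _ _ Hgrow Hcv n) as Hineq.
  unfold diff in Hineq. rewrite sumR_minus in Hineq. unfold L_tail, L_partial. lra.
Qed.

Lemma Ffun_bounds a x : (forall k, 0 < a k) -> 0 < x < 1 ->
  0 <= Ffun a x /\ forall n, Ffun a x <= prodR n (fun k => 1 - pw x (a k)).
Proof.
  intros Hpos Hx. set (P := fun n => prodR n (fun k => 1 - pw x (a k))).
  assert (Hf : forall k, 0 <= 1 - pw x (a k) <= 1).
  { intros k. pose proof (pw_in01 x (a k) (Hpos k) Hx). lra. }
  assert (Hdec : Un_decreasing P).
  { intros n. unfold P. simpl. destruct (prodR_bounds n _ Hf), (Hf n).
    rewrite <- (Rmult_1_r (prodR n _)) at 2. apply Rmult_le_compat_l; lra. }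
  destruct (decreasing_cv P Hdec) as [l Hl].
  { exists 0. intros z [n ->]. unfold opp_seq, P. destruct (prodR_bounds n _ Hf). lra. }
  unfold Ffun. fold P. rewrite (lim_eq P l Hl). split.
  - apply Rnot_lt_le. intros Hneg. destruct (Hl (- l) ltac:(lra)) as [N HN].
    specialize (HN N (le_n N)). unfold Rdist in HN. apply Rabs_def2 in HN.
    destruct (prodR_bounds N _ Hf). unfold P in HN. lra.
  - exact (decreasing_ineq P l Hdec Hl).
Qed.

(* Removing the factor [1 - x^{a_k}] from the infinite product [F(x)] gives the finite product
   over the other coupon types, evaluated at [t = - ln x]. *)
Lemma EU_integrand_ge a j N x : (1 <= j)%nat -> (forall k, 0 < a k) -> 0 < x < 1 ->
  (- ln x) ^ (j - 1) / INR (fact (j - 1)) * Ffun a x * L_partial a j x N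
  <= EU_integrand a j N (- ln x).
Proof.
  intros Hj Hpos Hx. destruct j as [|m]; [lia|]. rewrite Nat.sub_succ, Nat.sub_0_r.
  destruct (Ffun_bounds a x Hpos Hx) as [HF0 HFprod].
  assert (Hpw : forall i, exp (- (a i * - ln x)) = pw x (a i)).
  { intros i. rewrite pw_exp by lra. f_equal. ring. }
  unfold EU_integrand, L_partial. rewrite Nat.sub_succ, Nat.sub_0_r, <- sumR_scal.
  apply sumR_le. intros k Hk.
  rewrite (prodR_ext N _ (fun i => if Nat.eq_dec i k then 1 else 1 - pw x (a i)))
    by (intros i _; destruct (Nat.eq_dec i k); [reflexivity|now rewrite Hpw]).
  rewrite Hpw. set (t := - ln x). set (p := pw x (a k)).
  set (Q := prodR N (fun i => if Nat.eq_dec i k then 1 else 1 - pw x (a i))).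
  pose proof (pw_in01 x (a k) (Hpos k) Hx) as Hp. fold p in Hp.
  assert (HQ : Ffun a x / (1 - p) <= Q).
  { apply (Rmult_le_reg_r (1 - p)); [lra|].
    replace (Ffun a x / (1 - p) * (1 - p)) with (Ffun a x) by (field; lra).
    unfold Q, p. rewrite prodR_except by exact Hk. apply HFprod. }
  assert (Ht : 0 < t) by (unfold t; pose proof (ln_neg x Hx); lra).
  pose proof (Hpos k) as Hak. pose proof (INR_fact_lt_0 m) as Hfact.
  assert (Hcoef : 0 <= a k * p * ((a k * t) ^ m / INR (fact m))).
  { apply Rmult_le_pos; [nra|]. apply Rmult_le_pos; [apply pow_le; nra|].
    left; now apply Rinv_0_lt_compat. }
  apply Rle_trans with (a k * p * ((a k * t) ^ m / INR (fact m)) * (Ffun a x / (1 - p))).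
  - right. unfold L_term. fold p. rewrite Rpow_mult_distr. simpl. field. lra.
  - now apply Rmult_le_compat_l.
Qed.

Lemma I_integrand_le a j N c d x : (1 <= j)%nat -> (forall k, 0 < a k) -> cv_infty a ->
  0 < c <= x -> x <= d -> d < x_alpha a ->
  I_integrand a j x <= EU_integrand a j N (- ln x) / x
    + (- ln c) ^ (j - 1) / INR (fact (j - 1)) / c * L_tail a j d N.
Proof.
  intros Hj Hpos Hinf Hcx Hxd Hd. pose proof (x_alpha_le_1 a) as Hxa1.
  assert (Hx : 0 < x < 1) by lra.
  pose proof (EU_integrand_ge a j N x Hj Hpos Hx) as HEU.
  destruct (Ffun_bounds a x Hpos Hx) as [HF0 HFprod]. specialize (HFprod O). simpl in HFprod.
  pose proof (L_partial_le a j x N Hpos Hinf ltac:(lra)) as HLN.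
  pose proof (L_tail_le_compat a j x d N Hpos Hinf ltac:(lra) Hd) as Htail.
  assert (Hlnx : Rabs (ln x) = - ln x) by (apply Rabs_left, ln_neg, Hx).
  assert (Hlncx : 0 <= - ln x <= - ln c) by (pose proof (ln_neg x Hx); pose proof (ln_le c x); lra).
  assert (Hpow : 0 <= (- ln x) ^ (j - 1) <= (- ln c) ^ (j - 1))
    by (split; [apply pow_le|apply pow_incr]; lra).
  assert (Hinv : 0 < / x <= / c) by (split; [apply Rinv_0_lt_compat|apply Rinv_le_contravar]; lra).
  pose proof (INR_fact_lt_0 (j - 1)) as Hfact.
  set (T := (- ln x) ^ (j - 1) / INR (fact (j - 1))) in HEU.
  set (Tc := (- ln c) ^ (j - 1) / INR (fact (j - 1))).
  assert (HT : 0 <= T <= Tc).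
  { unfold T, Tc, Rdiv. pose proof (Rinv_0_lt_compat _ Hfact).
    split; [apply Rmult_le_pos|apply Rmult_le_compat_r]; lra. }
  unfold L_tail in Htail. set (L := Lfun a j x) in *. set (LN := L_partial a j x N) in *.
  set (F := Ffun a x) in *.
  replace (I_integrand a j x) with (T * F * LN * / x + T * F * (L - LN) * / x)
    by (unfold I_integrand, T, L, F; rewrite Hlnx; field; lra).
  assert (HFtail : 0 <= F * (L - LN) <= Lfun a j d - L_partial a j d N) by (split; nra).
  unfold L_tail, Rdiv. apply Rplus_le_compat.
  - apply Rmult_le_compat_r; lra.
  - replace (T * F * (L - LN) * / x) with (T * (F * (L - LN)) * / x) by ring.
    replace (Tc * / c * (Lfun a j d - L_partial a j d N))
      with (Tc * (Lfun a j d - L_partial a j d N) * / c) by ring.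
    apply Rmult_le_compat; try lra.
    + apply Rmult_le_pos; lra.
    + apply Rmult_le_compat; lra.
Qed.

Section Improper_integral.

Variable f : R -> R.
Hypothesis f_cont : forall t, continuous f t.
Hypothesis f_nonneg : forall t, 0 <= t -> 0 <= f t.

Let ex_RInt_f u v : ex_RInt f u v.
Proof. apply (@ex_RInt_continuous R_CompleteNormedModule). intros; apply f_cont. Qed.

Let RInt_Chasles_0 T1 T2 : RInt f 0 T1 + RInt f T1 T2 = RInt f 0 T2.
Proof. apply (RInt_Chasles (V:=R_CompleteNormedModule)); apply ex_RInt_f. Qed.

Let RInt_nonneg T1 T2 : 0 <= T1 <= T2 -> 0 <= RInt f T1 T2.
Proof. intros HT. apply RInt_ge_0; [lra|apply ex_RInt_f|intros; apply f_nonneg; lra]. Qed.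

Let RInt_0_le_compat T1 T2 : 0 <= T1 <= T2 -> RInt f 0 T1 <= RInt f 0 T2.
Proof. intros HT. rewrite <- (RInt_Chasles_0 T1 T2). pose proof (RInt_nonneg T1 T2 HT). lra. Qed.

Definition is_int_0_inf (l : R) : Prop :=
  forall eps, eps > 0 -> exists T0, forall T (pr : Riemann_integrable f 0 T),
    T0 <= T -> Rabs (RiemannInt pr - l) < eps.

Variable B : R.
Hypothesis RInt_f_bounded : forall T, 0 <= T -> RInt f 0 T <= B.

Lemma is_int_0_inf_sup : exists l, is_int_0_inf l.
Proof.
  set (E := fun y => exists T, 0 <= T /\ y = RInt f 0 T).
  assert (Hb : bound E) by (exists B; intros y [T [HT ->]]; now apply RInt_f_bounded).
  assert (Hne : exists y, E y) by (exists (RInt f 0 0), 0; split; [lra|reflexivity]).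
  destruct (completeness E Hb Hne) as [l [Hub Hlub]].
  exists l. intros eps Heps.
  assert (exists T0, 0 <= T0 /\ l - eps < RInt f 0 T0) as [T0 [HT0 Hl]].
  { apply NNPP. intros Hno. assert (is_upper_bound E (l - eps)) as Hle.
    { intros y [T [HT ->]]. apply Rnot_lt_le. intros Hlt. apply Hno. now exists T. }
    specialize (Hlub _ Hle). lra. }
  exists T0. intros T pr HT. rewrite <- RInt_Reals.
  pose proof (RInt_0_le_compat T0 T ltac:(lra)).
  assert (RInt f 0 T <= l) by (apply Hub; exists T; split; [lra|reflexivity]).
  apply Rabs_def1; lra.
Qed.

Let RInt_0_le_int_0_inf T : 0 <= T -> RInt f 0 T <= int_0_inf f.
Proof.
  intros HT.
  assert (Hspec : is_int_0_inf (int_0_inf f)) by exact (epsilon_spec (inhabits 0) _ is_int_0_inf_sup).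
  apply Rnot_lt_le. intros Hlt.
  destruct (Hspec (RInt f 0 T - int_0_inf f) ltac:(lra)) as [T0 HT0].
  set (T' := Rmax T0 T).
  pose proof (ex_RInt_Reals_0 _ 0 T' (ex_RInt_f 0 T')) as pr.
  specialize (HT0 T' pr (Rmax_l _ _)). rewrite <- RInt_Reals in HT0. apply Rabs_def2 in HT0.
  pose proof (RInt_0_le_compat T T' (conj HT (Rmax_r _ _))). lra.
Qed.

Lemma RInt_le_int_0_inf T1 T2 : 0 <= T1 <= T2 -> RInt f T1 T2 <= int_0_inf f.
Proof.
  intros HT. pose proof (RInt_nonneg 0 T1 ltac:(lra)).
  pose proof (RInt_0_le_int_0_inf T2 ltac:(lra)). rewrite <- (RInt_Chasles_0 T1 T2) in *. lra.
Qed.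

End Improper_integral.

Lemma is_RInt_exp_neg_ln (f : R -> R) c d : (forall t, continuous f t) -> 0 < c <= d ->
  is_RInt (fun x => f (- ln x) / x) c d (RInt f (- ln d) (- ln c)).
Proof.
  intros Hf Hcd.
  assert (Hmm : forall x, Rmin c d <= x <= Rmax c d -> 0 < x)
    by (intros x Hx; rewrite Rmin_left in Hx; lra).
  assert (Hcov : forall x, Rmin c d <= x <= Rmax c d ->
    is_derive (fun x => - ln x) x (- / x) /\ continuous (fun x => - / x) x).
  { intros x Hx. specialize (Hmm x Hx). split.
    - auto_derive; [lra|]. field. lra.
    - apply (@ex_derive_continuous R_AbsRing R_NormedModule). auto_derive. lra. }
  pose proof (is_RInt_comp (V:=R_CompleteNormedModule) f (fun x => - ln x) (fun x => - / x) c d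
    (fun x _ => Hf _) Hcov) as H.
  apply is_RInt_opp in H.
  rewrite (opp_RInt_swap (V:=R_CompleteNormedModule)) in H
    by (apply (@ex_RInt_continuous R_CompleteNormedModule); intros; apply Hf).
  eapply is_RInt_ext; [|exact H]. intros x Hx.
  assert (0 < x) by (apply Hmm; lra).
  unfold opp, scal; simpl. unfold mult; simpl. field. lra.
Qed.

Lemma EU_integrand_continuous a j N t : continuous (EU_integrand a j N) t.
Proof.
  apply (continuous_sumR N (fun k t => a k * exp (- (a k * t)) * ((a k * t) ^ (j - 1) / INR (fact (j - 1)))
    * prodR N (fun i => if Nat.eq_dec i k then 1 else 1 - exp (- (a i * t))))).
  intros k.
  apply (continuous_mult (fun t => a k * exp (- (a k * t)) * ((a k * t) ^ (j - 1) / INR (fact (j - 1))))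
    (fun t => prodR N (fun i => if Nat.eq_dec i k then 1 else 1 - exp (- (a i * t))))).
  - apply (@ex_derive_continuous R_AbsRing R_NormedModule). auto_derive. trivial.
  - apply (continuous_prodR N (fun i t => if Nat.eq_dec i k then 1 else 1 - exp (- (a i * t)))).
    intros i. destruct (Nat.eq_dec i k).
    + apply continuous_const.
    + apply (@ex_derive_continuous R_AbsRing R_NormedModule). auto_derive. trivial.
Qed.

Lemma prodR_except_exp_bounds a N k t : (forall i, 0 < a i) -> 0 <= t ->
  0 <= prodR N (fun i => if Nat.eq_dec i k then 1 else 1 - exp (- (a i * t))) <= 1.
Proof.
  intros Hpos Ht. apply prodR_bounds. intros i. destruct (Nat.eq_dec i k); [lra|].
  pose proof (exp_pos (- (a i * t))). pose proof (Hpos i).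
  assert (exp (- (a i * t)) <= 1) by (rewrite <- exp_0; apply exp_le_compat; nra). lra.
Qed.

Lemma EU_integrand_nonneg a j N t : (forall i, 0 < a i) -> 0 <= t -> 0 <= EU_integrand a j N t.
Proof.
  intros Hpos Ht. apply sumR_nonneg. intros k _.
  pose proof (prodR_except_exp_bounds a N k t Hpos Ht). pose proof (Hpos k).
  pose proof (exp_pos (- (a k * t))).
  assert (0 <= (a k * t) ^ (j - 1) / INR (fact (j - 1))).
  { apply Rmult_le_pos; [apply pow_le; nra|left; apply Rinv_0_lt_compat, INR_fact_lt_0]. }
  apply Rmult_le_pos; [apply Rmult_le_pos; [nra|lra]|lra].
Qed.

(* Half of the exponential decay absorbs the polynomial factor: [(c t)^m / m! <= 2^m e^{c t / 2}]. *)
Lemma EU_integrand_le a j N t : (forall i, 0 < a i) -> 0 <= t ->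
  EU_integrand a j N t <= sumR N (fun k => 2 ^ S (j - 1) * (a k / 2 * exp (- (a k / 2 * t)))).
Proof.
  intros Hpos Ht. apply sumR_le. intros k _. set (m := (j - 1)%nat).
  pose proof (prodR_except_exp_bounds a N k t Hpos Ht). pose proof (Hpos k).
  pose proof (exp_pos (- (a k * t))).
  set (Q := prodR N _) in *.
  assert (Hpoly : (a k * t) ^ m / INR (fact m) <= 2 ^ m * exp (a k / 2 * t)).
  { pose proof (pow_div_fact_le_exp (a k / 2 * t) m ltac:(nra)).
    replace ((a k * t) ^ m) with (2 ^ m * (a k / 2 * t) ^ m)
      by (rewrite <- Rpow_mult_distr; f_equal; field).
    pose proof (pow_lt 2 m ltac:(lra)).
    unfold Rdiv in *. rewrite Rmult_assoc. apply Rmult_le_compat_l; lra. }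
  assert (Hpoly0 : 0 <= (a k * t) ^ m / INR (fact m)).
  { apply Rmult_le_pos; [apply pow_le; nra|left; apply Rinv_0_lt_compat, INR_fact_lt_0]. }
  assert (Hhalf : exp (- (a k * t)) * exp (a k / 2 * t) = exp (- (a k / 2 * t))).
  { rewrite <- exp_plus. f_equal. field. }
  apply Rle_trans with (a k * exp (- (a k * t)) * ((a k * t) ^ m / INR (fact m))).
  { assert (Hw : 0 <= a k * exp (- (a k * t)) * ((a k * t) ^ m / INR (fact m)))
      by (apply Rmult_le_pos; [nra|lra]).
    pose proof (Rmult_le_compat_l _ Q 1 Hw ltac:(lra)). lra. }
  apply Rle_trans with (a k * exp (- (a k * t)) * (2 ^ m * exp (a k / 2 * t))).
  { apply Rmult_le_compat_l; [nra|lra]. }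
  right. rewrite <- Hhalf. simpl. field.
Qed.

Lemma is_RInt_exp_decay C c T :
  is_RInt (fun t => C * (c * exp (- (c * t)))) 0 T (C * (1 - exp (- (c * T)))).
Proof.
  replace (C * (1 - exp (- (c * T)))) with (- C * exp (- (c * T)) - - C * exp (- (c * 0)))
    by (rewrite Rmult_0_r, Ropp_0, exp_0; ring).
  apply (@is_RInt_derive R_CompleteNormedModule (fun t => - C * exp (- (c * t)))).
  - intros t _. auto_derive; [trivial|]. ring.
  - intros t _. apply (@ex_derive_continuous R_AbsRing R_NormedModule). auto_derive. trivial.
Qed.

Lemma RInt_EU_integrand_le a j N T : (forall i, 0 < a i) -> 0 <= T ->
  RInt (EU_integrand a j N) 0 T <= INR N * 2 ^ S (j - 1).
Proof.
  intros Hpos HT. set (C := 2 ^ S (j - 1)).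
  pose proof (is_RInt_sumR N (fun k t => C * (a k / 2 * exp (- (a k / 2 * t))))
    (fun k => C * (1 - exp (- (a k / 2 * T)))) 0 T
    (fun k => is_RInt_exp_decay C (a k / 2) T)) as Hint.
  apply Rle_trans with (sumR N (fun k => C * (1 - exp (- (a k / 2 * T))))).
  - rewrite <- (is_RInt_unique _ _ _ _ Hint). apply RInt_le; [exact HT| | |].
    + apply (@ex_RInt_continuous R_CompleteNormedModule). intros; apply EU_integrand_continuous.
    + eexists. exact Hint.
    + intros t Ht. apply EU_integrand_le; [exact Hpos|lra].
  - rewrite <- sumR_const. apply sumR_le. intros k _.
    pose proof (exp_pos (- (a k / 2 * T))). assert (0 < C) by (apply pow_lt; lra). nra.
Qed.

Lemma RInt_EU_integrand_le_EU a j N T1 T2 : (forall i, 0 < a i) -> 0 <= T1 <= T2 ->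
  RInt (EU_integrand a j N) T1 T2 <= EU a j N.
Proof.
  intros Hpos HT. apply (RInt_le_int_0_inf _ (EU_integrand_continuous a j N)
    (fun t => EU_integrand_nonneg a j N t Hpos) (INR N * 2 ^ S (j - 1))); [|exact HT].
  intros T. now apply RInt_EU_integrand_le.
Qed.

(* The substitution [x = e^{-t}] turns [I(alpha; j)] on [[c, d]] into the integral of [EU_integrand]
   over [[- ln d, - ln c]], up to the tail of the series [L] beyond [N]. *)
Lemma RiemannInt_I_integrand_le a j N c d (pr : Riemann_integrable (I_integrand a j) c d) :
  (1 <= j)%nat -> (forall k, 0 < a k) -> cv_infty a -> 0 < c <= d -> d < x_alpha a ->
  RiemannInt pr
  <= EU a j N + (d - c) * ((- ln c) ^ (j - 1) / INR (fact (j - 1)) / c * L_tail a j d N).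
Proof.
  intros Hj Hpos Hinf Hcd Hd. pose proof (x_alpha_le_1 a).
  set (K := (- ln c) ^ (j - 1) / INR (fact (j - 1)) / c * L_tail a j d N).
  set (g := fun x => EU_integrand a j N (- ln x) / x).
  set (v := RInt (EU_integrand a j N) (- ln d) (- ln c)).
  assert (Hg : is_RInt (fun x => g x + K) c d (v + (d - c) * K)).
  { apply (is_RInt_plus (V:=R_NormedModule)).
    - exact (is_RInt_exp_neg_ln _ c d (EU_integrand_continuous a j N) Hcd).
    - apply (is_RInt_const (V:=R_NormedModule)). }
  assert (HIg : RInt (I_integrand a j) c d <= RInt (fun x => g x + K) c d).
  { apply RInt_le; [lra|apply ex_RInt_Reals_1, pr|now exists (v + (d - c) * K)|].
    intros x Hx. apply I_integrand_le; auto; lra. }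
  rewrite (RInt_Reals _ _ _ pr), (is_RInt_unique _ _ _ _ Hg) in HIg.
  assert (Hv : v <= EU a j N).
  { apply RInt_EU_integrand_le_EU; [exact Hpos|].
    pose proof (ln_le c d ltac:(lra) ltac:(lra)). pose proof (ln_neg d ltac:(lra)). lra. }
  lra.
Qed.

Lemma L_tail_cv0 a j d : (forall k, 0 < a k) -> cv_infty a -> 0 < d < x_alpha a ->
  Un_cv (L_tail a j d) 0.
Proof.
  intros Hpos Hinf Hd eps Heps.
  destruct (L_partial_cv a j d Hpos Hinf Hd eps Heps) as [N HN]. exists N. intros n Hn.
  unfold Rdist, L_tail. rewrite Rminus_0_r, Rabs_minus_sym. now apply HN.
Qed.

Theorem proposition2 (a : nat -> R) (j : nat) :
  (forall k, 0 < a k) ->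
  cv_infty a ->
  0 < x_alpha a <= 1 ->
  (2 <= j)%nat ->
  I_infinite a j ->
  forall M : R, exists N0 : nat, forall N : nat, (N0 <= N)%nat -> M <= EU a j N.
Proof.
  intros Hpos Hinf Hxa Hj HI M.
  destruct (HI (M + 1)) as [c [d [Hcd [Hd [pr Hpr]]]]].
  set (z := (d - c) * ((- ln c) ^ (j - 1) / INR (fact (j - 1)) / c)).
  assert (Hz : 0 <= z).
  { pose proof (ln_neg c ltac:(lra)). pose proof (INR_fact_lt_0 (j - 1)).
    pose proof (pow_lt (- ln c) (j - 1) ltac:(lra)). unfold z, Rdiv.
    apply Rmult_le_pos; [lra|]. apply Rmult_le_pos; [apply Rmult_le_pos|]; left; try apply Rinv_0_lt_compat; lra. }
  destruct (L_tail_cv0 a j d Hpos Hinf ltac:(lra) (/ (z + 1)) ltac:(apply Rinv_0_lt_compat; lra))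
    as [N0 HN0].
  exists N0. intros N HN.
  specialize (HN0 N HN). unfold Rdist in HN0. rewrite Rminus_0_r in HN0. apply Rabs_def2 in HN0.
  assert (Hsmall : z * L_tail a j d N <= 1).
  { apply Rle_trans with (z * / (z + 1)); [apply Rmult_le_compat_l; lra|].
    apply (Rmult_le_reg_r (z + 1)); [lra|]. rewrite Rmult_assoc, Rinv_l by lra. lra. }
  pose proof (RiemannInt_I_integrand_le a j N c d pr ltac:(lia) Hpos Hinf Hcd Hd).
  unfold z in Hsmall. nra.
Qed.
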